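(* In the setting of the context, there exists a unique solution $\psi$ of the initial value problem \[ \psi'\psi-\frac{\gamma+\delta}{u}\psi=-\delta\,\frac{\beta N-\beta\tilde S e^{(\beta/\gamma)\tilde R}u+\gamma\log u}{u},\quad u\in\bigl(e^{-(\beta/\gamma)\alpha},e^{-(\beta/\gamma)\tilde R}\bigr),\qquad \psi\bigl(e^{-(\beta/\gamma)\tilde R}\bigr)=\beta\tilde I, \] satisfying $\psi(u)>0$ for all $u\in\bigl(e^{-(\beta/\gamma)\alpha},e^{-(\beta/\gamma)\tilde R}\bigr]$.
   Context: Let $\beta,\gamma,\delta>0$ be constants and $\tilde S,\tilde E,\tilde I,\tilde R$ real numbers with $N:=\tilde S+\tilde E+\tilde I+\tilde R>0$. Standing assumptions: (A1) $\tilde I>0$; (A2) $\tilde E>(\gamma/\delta)\tilde I$; (A3) $\tilde S>\delta\tilde E/(\beta\tilde I)$; (A4) $\tilde R\ge 0$ and $N>\tilde S e^{(\beta/\gamma)\tilde R}+\tilde R$. Let $\alpha$ be the unique solution in $(\tilde R,N)$ of $x=N-\tilde S e^{(\beta/\gamma)\tilde R}e^{-(\beta/\gamma)x}$, and assume (A5) $\tilde S<(\gamma/\beta)e^{(\beta/\gamma)(\alpha-\tilde R)}$. *)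

From Stdlib Require Import Reals.
Open Scope R_scope.

Definition ivp_solution (beta gamma delta St It Rt N alpha : R) (psi : R -> R) : Prop :=
  let lo := exp (- (beta / gamma) * alpha) in
  let hi := exp (- (beta / gamma) * Rt) in
  (forall u, lo < u < hi ->
     exists d, derivable_pt_lim psi u d /\
       d * psi u - (gamma + delta) / u * psi u
       = - delta * ((beta * N - beta * St * exp ((beta / gamma) * Rt) * u
                     + gamma * ln u) / u)) /\
  limit1_in psi (fun x => lo < x <= hi) (psi hi) hi /\
  psi hi = beta * It /\
  (forall u, lo < u <= hi -> psi u > 0).

(* Write k1 = gamma + delta and g(u) = beta N - beta St e^{(beta/gamma) Rt} u + gamma ln u, so that for
   psi > 0 the equation reads psi' = k1/u - delta g(u)/(u psi), to be solved backward from
   hi = e^{-(beta/gamma) Rt} on (lo, hi], lo = e^{-(beta/gamma) alpha}.  As ln is concave so is g;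
   the defining equation of alpha gives g(lo) = 0, and g(hi) = beta (Et + It) > 0, hence g > 0 on (lo, hi].

   Existence: on [a, hi] with a > lo we have g >= c > 0, so psi' < 0 wherever psi is below some m > 0,
   and a solution started at beta It stays above m when integrated backward.  Truncating psi at m and
   clamping u to [a, hi] makes the right-hand side bounded and globally Lipschitz, and Picard iteration,
   a contraction for an exponentially weighted norm, gives a solution on [a, hi].

   Uniqueness: the right-hand side is increasing in psi > 0, so for two positive solutions
   (psi1 - psi2)^2 is nondecreasing in u; it tends to 0 at hi, hence vanishes.  This also glues the
   solutions on the intervals [a, hi], a > lo, into one on (lo, hi]. *)

From Stdlib Require Import Reals Lra Lia IndefiniteDescription.
From Coquelicot Require Import Coquelicot.
Open Scope R_scope.

Lemma nondecreasing_of_derivative f f' p q :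
  p <= q -> (forall c, p <= c <= q -> derivable_pt_lim f c (f' c)) ->
  (forall c, p <= c <= q -> 0 <= f' c) -> f p <= f q.
Proof.
  intros Hpq Hd Hpos. destruct (Rle_lt_or_eq_dec _ _ Hpq) as [Hlt|<-]; [|lra].
  destruct (MVT_cor2 f f' p q Hlt Hd) as [c [Hc Hcpq]].
  assert (0 <= f' c) by (apply Hpos; lra). nra.
Qed.

Lemma Rabs_le_of_derivative_bound D D' P P' a b :
  (forall c, a <= c <= b -> derivable_pt_lim D c (D' c)) ->
  (forall c, a <= c <= b -> derivable_pt_lim P c (P' c)) ->
  (forall c, a <= c <= b -> Rabs (D' c) <= - P' c) ->
  D b = 0 -> 0 <= P b -> forall t, a <= t <= b -> Rabs (D t) <= P t.
Proof.
  intros HD HP Hbound Db Pb t Ht.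
  assert (Hup : D t - P t <= D b - P b).
  { apply (nondecreasing_of_derivative (fun x => D x - P x) (fun x => D' x - P' x)); [lra| |].
    - intros c Hc. apply derivable_pt_lim_minus; [apply HD|apply HP]; lra.
    - intros c Hc. assert (H := Hbound c ltac:(lra)). apply Rabs_le_between in H. lra. }
  assert (Hlow : - D t - P t <= - D b - P b).
  { apply (nondecreasing_of_derivative (fun x => - D x - P x) (fun x => - D' x - P' x)); [lra| |].
    - intros c Hc. apply derivable_pt_lim_minus; [apply derivable_pt_lim_opp, HD|apply HP]; lra.
    - intros c Hc. assert (H := Hbound c ltac:(lra)). apply Rabs_le_between in H. lra. }
  apply Rabs_le_between. lra.
Qed.

Lemma lipschitz_of_derivative_bound f f' M :
  (forall t, derivable_pt_lim f t (f' t)) -> (forall t, Rabs (f' t) <= M) ->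
  forall s t, Rabs (f s - f t) <= M * Rabs (s - t).
Proof.
  intros Hd Hb.
  assert (Hle : forall s t, s < t -> Rabs (f t - f s) <= M * Rabs (t - s)).
  { intros s t Hst. destruct (MVT_cor2 f f' s t Hst (fun c _ => Hd c)) as [c [Hc _]].
    rewrite Hc, Rabs_mult. apply Rmult_le_compat_r; [apply Rabs_pos | apply Hb]. }
  intros s t. destruct (Rtotal_order s t) as [Hst|[<-|Hts]].
  - rewrite (Rabs_minus_sym (f s)), (Rabs_minus_sym s). now apply Hle.
  - rewrite !Rminus_diag, Rabs_R0. lra.
  - now apply Hle.
Qed.

Lemma limit1_in_of_lipschitz f D x0 B :
  (forall x, D x -> Rabs (f x - f x0) <= B * Rabs (x - x0)) -> limit1_in f D (f x0) x0.
Proof.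
  intros Hlip eps Heps. exists (eps / (Rabs B + 1)).
  split; [apply Rdiv_lt_0_compat; [lra | pose proof (Rabs_pos B); lra]|].
  intros x [Dx Hx]. simpl in *. unfold R_dist in *.
  assert (Hk : (Rabs B + 1) * (eps / (Rabs B + 1)) = eps) by (field; pose proof (Rabs_pos B); lra).
  pose proof (Hlip x Dx). pose proof (Rle_abs B). pose proof (Rabs_pos B). pose proof (Rabs_pos (x - x0)).
  assert (B * Rabs (x - x0) <= Rabs B * Rabs (x - x0)) by nra.
  nra.
Qed.

Lemma limit1_in_enlarge f D D' l x0 r :
  0 < r -> (forall x, D' x -> Rabs (x - x0) < r -> D x) ->
  limit1_in f D l x0 -> limit1_in f D' l x0.
Proof.
  intros Hr Hsub Hlim eps Heps. destruct (Hlim eps Heps) as [alp [Halp H]].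
  exists (Rmin alp r). split; [now apply Rmin_pos|].
  intros x [Dx Hx]. simpl in Hx. unfold R_dist in Hx. apply H. simpl. unfold R_dist.
  split; [apply Hsub; [exact Dx|] |]; eapply Rlt_le_trans; [exact Hx | apply Rmin_r | exact Hx | apply Rmin_l].
Qed.

Lemma continuity_pt_of_lipschitz f c B :
  (forall s, Rabs (f s - f c) <= B * Rabs (s - c)) -> continuity_pt f c.
Proof. intros Hlip. apply (limit1_in_of_lipschitz _ _ _ B). intros x _. apply Hlip. Qed.

Lemma continuity_pt_comp_lipschitz (F : R -> R -> R) L h t0 :
  (forall y, continuity_pt (fun t => F t y) t0) ->
  (forall t y1 y2, Rabs (F t y1 - F t y2) <= L * Rabs (y1 - y2)) ->
  continuity_pt h t0 -> continuity_pt (fun t => F t (h t)) t0.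
Proof.
  intros HF Hlip Hh eps Heps.
  destruct (HF (h t0) (eps / 2)) as [d1 [Hd1 H1]]; [lra|].
  destruct (Hh (eps / (2 * (Rabs L + 1)))) as [d2 [Hd2 H2]].
  { apply Rdiv_lt_0_compat; [lra | pose proof (Rabs_pos L); lra]. }
  exists (Rmin d1 d2). split; [now apply Rmin_pos|].
  intros x [Dx Hx]. simpl in *. unfold R_dist in *.
  specialize (H1 x (conj Dx (Rlt_le_trans _ _ _ Hx (Rmin_l _ _)))).
  specialize (H2 x (conj Dx (Rlt_le_trans _ _ _ Hx (Rmin_r _ _)))).
  simpl in *. unfold R_dist in *.
  replace (F x (h x) - F t0 (h t0)) with ((F x (h x) - F x (h t0)) + (F x (h t0) - F t0 (h t0))) by ring.
  eapply Rle_lt_trans; [apply Rabs_triang|].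
  assert (Hk : (2 * (Rabs L + 1)) * (eps / (2 * (Rabs L + 1))) = eps)
    by (field; pose proof (Rabs_pos L); lra).
  pose proof (Hlip x (h x) (h t0)). pose proof (Rle_abs L). pose proof (Rabs_pos L).
  pose proof (Rabs_pos (h x - h t0)).
  assert (L * Rabs (h x - h t0) <= Rabs L * Rabs (h x - h t0)) by nra.
  nra.
Qed.

Lemma derivable_pt_lim_neg_right f t d r :
  derivable_pt_lim f t d -> d < 0 -> 0 < r -> exists h, 0 < h < r /\ f (t + h) < f t.
Proof.
  intros Hd Hneg Hr. destruct (Hd (- d / 2)) as [[del Hdel] Hlim]; [lra|]. simpl in Hlim.
  set (h := Rmin (del / 2) (r / 2)).
  assert (Hh : 0 < h) by (apply Rmin_pos; lra).
  assert (Hhdel : h <= del / 2) by apply Rmin_l. assert (Hhr : h <= r / 2) by apply Rmin_r.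
  exists h. split; [lra|].
  specialize (Hlim h ltac:(lra) ltac:(rewrite Rabs_right; lra)).
  apply Rabs_def2 in Hlim.
  assert (Hq : (f (t + h) - f t) / h < d / 2) by lra.
  apply (Rmult_lt_compat_l h) in Hq; [|lra].
  replace (h * ((f (t + h) - f t) / h)) with (f (t + h) - f t) in Hq by (field; lra).
  nra.
Qed.

Lemma derivable_pt_lim_RInt f b t :
  (forall s, continuity_pt f s) -> derivable_pt_lim (fun x => RInt f b x) t (f t).
Proof.
  intros Hc. apply is_derive_Reals, (is_derive_RInt _ _ b).
  - apply filter_forall. intros x. apply (RInt_correct (V := R_CompleteNormedModule)).
    apply ex_RInt_continuous. intros z _. apply continuity_pt_filterlim, Hc.
  - apply continuity_pt_filterlim, Hc.
Qed.

Definition clamp (a b t : R) : R := Rmax a (Rmin b t).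

Lemma clamp_bounds a b t : a <= b -> a <= clamp a b t <= b.
Proof. intros Hab. unfold clamp, Rmax, Rmin. repeat destruct Rle_dec; lra. Qed.

Lemma clamp_id a b t : a <= t <= b -> clamp a b t = t.
Proof. intros Ht. unfold clamp, Rmax, Rmin. repeat destruct Rle_dec; lra. Qed.

Lemma clamp_lipschitz a b s t : Rabs (clamp a b s - clamp a b t) <= Rabs (s - t).
Proof. unfold clamp, Rmax, Rmin. repeat destruct Rle_dec; split_Rabs; lra. Qed.

Lemma Rmax_lipschitz m y1 y2 : Rabs (Rmax m y1 - Rmax m y2) <= Rabs (y1 - y2).
Proof. unfold Rmax. repeat destruct Rle_dec; split_Rabs; lra. Qed.

Lemma half_pow_pos n : 0 < (/ 2) ^ n.
Proof. apply pow_lt. lra. Qed.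

Lemma half_pow_small K eps : 0 < eps -> exists N, forall n, (N <= n)%nat -> K * (/ 2) ^ n < eps.
Proof.
  intros Heps. pose proof (Rabs_pos K).
  destruct (pow_lt_1_zero (/ 2) ltac:(rewrite Rabs_right; lra) (eps / (Rabs K + 1)))
    as [N HN]; [apply Rdiv_lt_0_compat; lra|].
  exists N. intros n Hn. specialize (HN n Hn).
  rewrite Rabs_right in HN by (left; apply half_pow_pos).
  assert (Hk : (Rabs K + 1) * (eps / (Rabs K + 1)) = eps) by (field; lra).
  pose proof (half_pow_pos n). pose proof (Rle_abs K).
  assert (K * (/ 2) ^ n <= Rabs K * (/ 2) ^ n) by nra.
  nra.
Qed.

Lemma Rle_of_half_pow_bound x y K : (forall n, x <= y + K * (/ 2) ^ n) -> x <= y.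
Proof.
  intros H. apply Rle_plus_epsilon. intros eps Heps.
  destruct (half_pow_small K eps Heps) as [N HN].
  specialize (H N). specialize (HN N (le_n N)). lra.
Qed.

Lemma half_pow_tail (u : nat -> R) K :
  (forall n, Rabs (u (S n) - u n) <= K * (/ 2) ^ n) ->
  forall n k, Rabs (u (k + n)%nat - u n) <= 2 * K * (/ 2) ^ n.
Proof.
  intros Hstep n.
  assert (HK : 0 <= K).
  { pose proof (Hstep O). pose proof (Rabs_pos (u 1%nat - u O)). simpl in *. lra. }
  assert (Htail : forall k, Rabs (u (k + n)%nat - u n) <= 2 * K * (/ 2) ^ n * (1 - (/ 2) ^ k)).
  { induction k as [|k IH].
    - rewrite Nat.add_0_l, Rminus_diag, Rabs_R0. simpl. lra.
    - replace (u (S k + n)%nat - u n) with ((u (S (k + n)) - u (k + n)%nat) + (u (k + n)%nat - u n))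
        by (rewrite Nat.add_succ_l; ring).
      eapply Rle_trans; [apply Rabs_triang|].
      pose proof (Hstep (k + n)%nat) as Hs. rewrite pow_add in Hs.
      replace (2 * K * (/ 2) ^ n * (1 - (/ 2) ^ S k))
        with (K * ((/ 2) ^ k * (/ 2) ^ n) + 2 * K * (/ 2) ^ n * (1 - (/ 2) ^ k)) by (simpl; field).
      lra. }
  intros k. eapply Rle_trans; [apply Htail|].
  pose proof (half_pow_pos k). pose proof (half_pow_pos n).
  assert (0 <= 2 * K * (/ 2) ^ n) by (apply Rmult_le_pos; lra). nra.
Qed.

Lemma Lim_seq_half_pow_bound (u : nat -> R) K :
  (forall n, Rabs (u (S n) - u n) <= K * (/ 2) ^ n) ->
  forall n, Rabs (real (Lim_seq u) - u n) <= 2 * K * (/ 2) ^ n.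
Proof.
  intros Hstep. pose proof (half_pow_tail u K Hstep) as Htail.
  assert (Hlim : is_lim_seq u (real (Lim_seq u))).
  { assert (Hex : ex_finite_lim_seq u).
    { apply ex_lim_seq_cauchy_corr. intros eps.
      destruct (half_pow_small (2 * K) eps (cond_pos eps)) as [N HN]. exists N.
      intros n m Hn Hm. destruct (Nat.le_ge_cases n m) as [Hnm|Hmn].
      - replace m with ((m - n) + n)%nat by lia. rewrite Rabs_minus_sym.
        eapply Rle_lt_trans; [apply Htail | now apply HN].
      - replace n with ((n - m) + m)%nat by lia.
        eapply Rle_lt_trans; [apply Htail | now apply HN]. }
    destruct Hex as [l Hl]. now rewrite (is_lim_seq_unique _ _ Hl). }
  intros n.
  assert (Hn : is_lim_seq (fun k => Rabs (u (k + n)%nat - u n)) (Rabs (real (Lim_seq u) - u n))).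
  { apply (is_lim_seq_abs _ (real (Lim_seq u) - u n)).
    apply is_lim_seq_minus'; [now apply is_lim_seq_incr_n | apply is_lim_seq_const]. }
  exact (is_lim_seq_le _ _ _ _ (Htail n) Hn (is_lim_seq_const _)).
Qed.

(** * Backward Picard iteration *)

Section Picard.

Variables (F : R -> R -> R) (a b y0 L B : R).
Hypothesis a_le_b : a <= b.
Hypothesis L_ge0 : 0 <= L.
Hypothesis F_continuous : forall y t, continuity_pt (fun s => F s y) t.
Hypothesis F_lipschitz : forall t y1 y2, Rabs (F t y1 - F t y2) <= L * Rabs (y1 - y2).
Hypothesis F_bounded : forall t y, Rabs (F t y) <= B.

Lemma F_bound_nonneg : 0 <= B.
Proof. exact (Rle_trans _ _ _ (Rabs_pos _) (F_bounded 0 0)). Qed.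

Fixpoint picard (n : nat) : R -> R :=
  match n with
  | O => fun _ => y0
  | S k => fun t => y0 + RInt (fun s => F s (picard k s)) b t
  end.

Lemma picard_derive_of_continuous n :
  (forall t, continuity_pt (picard n) t) ->
  forall t, derivable_pt_lim (picard (S n)) t (F t (picard n t)).
Proof.
  intros Hc t.
  assert (HI : derivable_pt_lim (fun x => RInt (fun s => F s (picard n s)) b x) t (F t (picard n t))).
  { apply (derivable_pt_lim_RInt (fun s => F s (picard n s))). intros s.
    exact (continuity_pt_comp_lipschitz F L (picard n) s (fun y => F_continuous y s) F_lipschitz (Hc s)). }
  pose proof (derivable_pt_lim_plus _ _ t _ _ (derivable_pt_lim_const y0 t) HI) as H.
  rewrite Rplus_0_l in H. exact H.
Qed.

Lemma picard_continuous n t : continuity_pt (picard n) t.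
Proof.
  revert t. induction n as [|n IH]; intros t.
  - apply continuity_pt_const. now intros x y.
  - exact (derivable_continuous_pt _ _ (exist _ _ (picard_derive_of_continuous n IH t))).
Qed.

Lemma picard_derive n t : derivable_pt_lim (picard (S n)) t (F t (picard n t)).
Proof. exact (picard_derive_of_continuous n (picard_continuous n) t). Qed.

Lemma picard_at_b n : picard n b = y0.
Proof.
  destruct n; simpl; [reflexivity|].
  rewrite (RInt_point (V := R_CompleteNormedModule)). apply Rplus_0_r.
Qed.

Lemma picard_lipschitz n s t : Rabs (picard n s - picard n t) <= B * Rabs (s - t).
Proof.
  destruct n as [|n].
  - simpl. rewrite Rminus_diag, Rabs_R0.
    apply Rmult_le_pos; [exact F_bound_nonneg | apply Rabs_pos].
  - apply (lipschitz_of_derivative_bound _ (fun t => F t (picard n t))).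
    + apply picard_derive.
    + intros; apply F_bounded.
Qed.

(* The weight [exp (2 L (b - t))] turns the Picard map into a 1/2-contraction. *)
Lemma picard_step_weighted n t :
  a <= t <= b ->
  Rabs (picard (S n) t - picard n t) <= B * (b - a) * (/ 2) ^ n * exp (2 * L * (b - t)).
Proof.
  revert t. induction n as [|n IH]; intros t Ht.
  - pose proof (picard_lipschitz 1 t b) as H1.
    rewrite picard_at_b, (Rabs_left1 (t - b)) in H1 by lra.
    change (picard 0 t) with y0.
    pose proof F_bound_nonneg as HB.
    assert (He : 1 <= exp (2 * L * (b - t))).
    { pose proof (exp_ineq1_le (2 * L * (b - t))). assert (0 <= L * (b - t)) by nra. lra. }
    assert (B * (- (t - b)) <= B * (b - a)) by nra.
    assert (0 <= B * (b - a)) by nra.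
    simpl pow. nra.
  - apply (Rabs_le_of_derivative_bound
             (fun x => picard (S (S n)) x - picard (S n) x)
             (fun x => F x (picard (S n) x) - F x (picard n x))
             (fun x => B * (b - a) * (/ 2) ^ S n * exp (2 * L * (b - x)))
             (fun x => - (2 * L) * (B * (b - a) * (/ 2) ^ S n * exp (2 * L * (b - x)))) t b);
      try lra.
    + intros c _. apply derivable_pt_lim_minus; apply picard_derive.
    + intros c _. apply is_derive_Reals. auto_derive; [easy|]. simpl pow. unfold Rminus. ring.
    + intros c Hc. eapply Rle_trans; [apply F_lipschitz|].
      assert (H := IH c ltac:(lra)).
      replace (- (- (2 * L) * (B * (b - a) * (/ 2) ^ S n * exp (2 * L * (b - c)))))
        with (L * (B * (b - a) * (/ 2) ^ n * exp (2 * L * (b - c)))) by (simpl; field).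
      now apply Rmult_le_compat_l.
    + rewrite !picard_at_b. ring.
    + pose proof F_bound_nonneg as HB.
      pose proof (half_pow_pos (S n)). pose proof (exp_pos (2 * L * (b - b))).
      assert (0 <= B * (b - a)) by nra. apply Rmult_le_pos; [|lra]. nra.
Qed.

Definition picard_rate : R := B * (b - a) * exp (2 * L * (b - a)).

Lemma picard_step n t :
  a <= t <= b -> Rabs (picard (S n) t - picard n t) <= picard_rate * (/ 2) ^ n.
Proof.
  intros Ht. eapply Rle_trans; [now apply picard_step_weighted|]. unfold picard_rate.
  pose proof F_bound_nonneg as HB.
  assert (He : exp (2 * L * (b - t)) <= exp (2 * L * (b - a))).
  { assert (Hle : 2 * L * (b - t) <= 2 * L * (b - a)) by nra.
    destruct (Rle_lt_or_eq_dec _ _ Hle) as [Hlt | ->]; [left; now apply exp_increasing | lra]. }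
  pose proof (half_pow_pos n). assert (0 <= B * (b - a) * (/ 2) ^ n) by (apply Rmult_le_pos; nra).
  nra.
Qed.

Definition picard_limit (t : R) : R := real (Lim_seq (fun n => picard n t)).

Lemma picard_limit_approx n t :
  a <= t <= b -> Rabs (picard_limit t - picard n t) <= 2 * picard_rate * (/ 2) ^ n.
Proof.
  intros Ht. apply (Lim_seq_half_pow_bound (fun n => picard n t)). intros k. now apply picard_step.
Qed.

Lemma picard_limit_at_b : picard_limit b = y0.
Proof.
  assert (H : Rabs (picard_limit b - y0) <= 0).
  { apply (Rle_of_half_pow_bound _ _ (2 * picard_rate)). intros n.
    rewrite <- (picard_at_b n). rewrite Rplus_0_l. apply picard_limit_approx. lra. }
  pose proof (Rabs_pos (picard_limit b - y0)).
  apply Rminus_diag_uniq, Rabs_eq_0. lra.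
Qed.

Lemma picard_limit_lipschitz s t :
  a <= s <= b -> a <= t <= b -> Rabs (picard_limit s - picard_limit t) <= B * Rabs (s - t).
Proof.
  intros Hs Ht. apply (Rle_of_half_pow_bound _ _ (4 * picard_rate)). intros n.
  replace (picard_limit s - picard_limit t)
    with ((picard_limit s - picard n s) + (picard n s - picard n t) + (picard n t - picard_limit t))
    by ring.
  pose proof (picard_limit_approx n s Hs) as Hs_approx.
  pose proof (picard_limit_approx n t Ht) as Ht_approx.
  rewrite Rabs_minus_sym in Ht_approx.
  pose proof (picard_lipschitz n s t).
  pose proof (Rabs_triang (picard_limit s - picard n s + (picard n s - picard n t)) (picard n t - picard_limit t)).
  pose proof (Rabs_triang (picard_limit s - picard n s) (picard n s - picard n t)).
  lra.
Qed.

Lemma picard_limit_derive t :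
  a < t < b -> derivable_pt_lim picard_limit t (F t (picard_limit t)).
Proof.
  intros Ht.
  assert (Hr : 0 < (b - a) / 2) by lra.
  assert (Hball : forall x, Boule ((a + b) / 2) (mkposreal _ Hr) x -> a <= x <= b).
  { intros x Hx. unfold Boule in Hx. simpl in Hx. apply Rabs_def2 in Hx. lra. }
  apply (CVU_derivable (fun n => picard (S n)) (fun n x => F x (picard n x)) picard_limit
           (fun x => F x (picard_limit x)) ((a + b) / 2) (mkposreal _ Hr)).
  - intros eps Heps. destruct (half_pow_small (L * (2 * picard_rate)) eps Heps) as [N HN].
    exists N. intros n x Hn Hx. eapply Rle_lt_trans; [apply F_lipschitz|].
    eapply Rle_lt_trans; [|now apply (HN n)]. rewrite Rmult_assoc.
    apply Rmult_le_compat_l; [lra|]. now apply picard_limit_approx, Hball.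
  - intros x Hx eps Heps. destruct (half_pow_small (2 * picard_rate) eps Heps) as [N HN].
    exists N. intros n Hn. unfold R_dist. rewrite Rabs_minus_sym.
    eapply Rle_lt_trans; [now apply picard_limit_approx, Hball | apply HN; lia].
  - intros n x _. apply picard_derive.
  - unfold Boule. simpl. apply Rabs_def1; lra.
Qed.

End Picard.

Theorem ode_backward_existence (F : R -> R -> R) a b y0 L B :
  a <= b -> 0 <= L ->
  (forall y t, continuity_pt (fun s => F s y) t) ->
  (forall t y1 y2, Rabs (F t y1 - F t y2) <= L * Rabs (y1 - y2)) ->
  (forall t y, Rabs (F t y) <= B) ->
  exists y : R -> R, y b = y0 /\
    (forall t, a < t < b -> derivable_pt_lim y t (F t (y t))) /\
    (forall s t, a <= s <= b -> a <= t <= b -> Rabs (y s - y t) <= B * Rabs (s - t)).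
Proof.
  intros Hab HL Hc Hlip Hbd. exists (picard_limit F b y0).
  split; [|split].
  - now apply (picard_limit_at_b F a b y0 L B).
  - now apply (picard_limit_derive F a b y0 L B).
  - now apply (picard_limit_lipschitz F a b y0 L B).
Qed.

(** * Barriers and backward uniqueness *)

Lemma lower_barrier (y y' : R -> R) a b m B :
  a <= b ->
  (forall s t, a <= s <= b -> a <= t <= b -> Rabs (y s - y t) <= B * Rabs (s - t)) ->
  (forall t, a <= t < b -> derivable_pt_lim y t (y' t)) ->
  (forall t, a <= t < b -> y t < m -> y' t < 0) ->
  m <= y b -> forall t, a <= t <= b -> m <= y t.
Proof.
  intros Hab Hlip Hd Hdown Hb.
  set (z := fun t => y (clamp a b t)).
  assert (Hz : forall t, a <= t <= b -> z t = y t) by (intros t Ht; unfold z; now rewrite clamp_id).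
  assert (Hzc : forall c, continuity_pt z c).
  { intros c. apply (continuity_pt_of_lipschitz _ _ (Rabs B)). intros s. unfold z.
    eapply Rle_trans; [apply Hlip; now apply clamp_bounds|].
    eapply Rle_trans; [apply Rmult_le_compat_r; [apply Rabs_pos | apply Rle_abs]|].
    apply Rmult_le_compat_l; [apply Rabs_pos | apply clamp_lipschitz]. }
  destruct (continuity_ab_min z a b Hab (fun c _ => Hzc c)) as [tm [Hmin Htm]].
  assert (Hm : m <= y tm).
  { destruct (Rle_lt_dec m (y tm)) as [Hle|Hlt]; [exact Hle|exfalso].
    assert (Htmb : tm < b) by (destruct (Rle_lt_or_eq_dec _ _ (proj2 Htm)) as [H| ->]; lra).
    destruct (derivable_pt_lim_neg_right y tm (y' tm) (b - tm)) as [h [Hh Hyh]];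
      [apply Hd; lra | apply Hdown; lra | lra |].
    specialize (Hmin (tm + h) ltac:(lra)). rewrite !Hz in Hmin by lra. lra. }
  intros t Ht. specialize (Hmin t Ht). rewrite !Hz in Hmin by lra. lra.
Qed.

Lemma backward_uniqueness (f1 f2 f1' f2' : R -> R) c hi :
  (forall t, c <= t < hi -> derivable_pt_lim f1 t (f1' t)) ->
  (forall t, c <= t < hi -> derivable_pt_lim f2 t (f2' t)) ->
  (forall t, c <= t < hi -> 0 <= (f1' t - f2' t) * (f1 t - f2 t)) ->
  limit1_in (fun t => f1 t - f2 t) (fun t => c <= t < hi) 0 hi ->
  forall t, c <= t < hi -> f1 t = f2 t.
Proof.
  intros D1 D2 Hmono Hlim t Ht.
  assert (Hsq : forall s, t <= s < hi -> (f1 t - f2 t) * (f1 t - f2 t) <= (f1 s - f2 s) * (f1 s - f2 s)).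
  { intros s Hs.
    apply (nondecreasing_of_derivative (fun x => (f1 x - f2 x) * (f1 x - f2 x))
             (fun x => (f1' x - f2' x) * (f1 x - f2 x) + (f1 x - f2 x) * (f1' x - f2' x))); [lra| |].
    - intros x Hx.
      assert (Hgap : derivable_pt_lim (fun x => f1 x - f2 x) x (f1' x - f2' x))
        by (apply derivable_pt_lim_minus; [apply D1 | apply D2]; lra).
      exact (derivable_pt_lim_mult _ _ x _ _ Hgap Hgap).
    - intros x Hx. specialize (Hmono x ltac:(lra)). lra. }
  apply Rminus_diag_uniq. destruct (Req_dec (f1 t - f2 t) 0) as [H0|Hne]; [exact H0|exfalso].
  destruct (Hlim (Rabs (f1 t - f2 t)) (Rabs_pos_lt _ Hne)) as [del [Hdel Hnear]].
  set (s := Rmax t (hi - del / 2)).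
  assert (Hs : t <= s < hi) by (unfold s, Rmax; destruct Rle_dec; lra).
  assert (Hsd : Rabs (f1 s - f2 s - 0) < Rabs (f1 t - f2 t)).
  { apply Hnear. split; [lra|]. simpl. unfold R_dist, s, Rmax. destruct Rle_dec; split_Rabs; lra. }
  rewrite Rminus_0_r in Hsd. specialize (Hsq s Hs).
  pose proof (Rsqr_abs (f1 s - f2 s)). pose proof (Rsqr_abs (f1 t - f2 t)). unfold Rsqr in *.
  pose proof (Rabs_pos (f1 s - f2 s)). nra.
Qed.

(** * The Abel equation psi psi' - (k1/t) psi = - k2 g(t) / t *)

Definition abel_rhs (k1 k2 : R) (g : R -> R) (t y : R) : R := k1 / t - k2 * g t / (t * y).

Section AbelEquation.

Variables (k1 k2 : R) (g : R -> R).

Lemma abel_rhs_continuity_pt y t :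
  0 < t -> y <> 0 -> continuity_pt g t -> continuity_pt (fun s => abel_rhs k1 k2 g s y) t.
Proof.
  intros Ht Hy Hg. unfold abel_rhs.
  assert (Hid : continuity_pt id t) by apply derivable_continuous_pt, derivable_pt_id.
  assert (Hcst : forall c, continuity_pt (fct_cte c) t) by (intros; apply derivable_continuous_pt, derivable_pt_const).
  apply (continuity_pt_minus (fct_cte k1 / id)%F (fct_cte k2 * g / (id * fct_cte y))%F).
  - apply continuity_pt_div; auto. unfold id. lra.
  - apply continuity_pt_div; [now apply continuity_pt_mult | now apply continuity_pt_mult |].
    unfold mult_fct, id, fct_cte. now apply Rmult_integral_contrapositive_currified; lra.
Qed.

Lemma abel_rhs_lipschitz t0 t G m y1 y2 :
  0 < t0 <= t -> 0 <= k2 -> 0 <= g t <= G -> 0 < m -> m <= y1 -> m <= y2 ->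
  Rabs (abel_rhs k1 k2 g t y1 - abel_rhs k1 k2 g t y2) <= k2 * G / (t0 * (m * m)) * Rabs (y1 - y2).
Proof.
  intros Ht Hk2 Hg Hm Hy1 Hy2.
  replace (abel_rhs k1 k2 g t y1 - abel_rhs k1 k2 g t y2)
    with (k2 * g t / (t * (y1 * y2)) * (y1 - y2)) by (unfold abel_rhs; field; repeat split; lra).
  assert (Hmm : 0 < m * m <= y1 * y2) by (split; nra).
  assert (Hden : 0 < t0 * (m * m) <= t * (y1 * y2)) by (split; nra).
  rewrite Rabs_mult. apply Rmult_le_compat_r; [apply Rabs_pos|].
  rewrite Rabs_right by (apply Rle_ge, Rmult_le_pos; [nra | left; apply Rinv_0_lt_compat; lra]).
  unfold Rdiv. apply Rmult_le_compat; [nra | left; apply Rinv_0_lt_compat; lra | nra |].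
  apply Rinv_le_contravar; lra.
Qed.

Lemma abel_rhs_bounded t0 t G m y :
  0 < t0 <= t -> 0 <= k1 -> 0 <= k2 -> 0 <= g t <= G -> 0 < m <= y ->
  Rabs (abel_rhs k1 k2 g t y) <= k1 / t0 + k2 * G / (t0 * m).
Proof.
  intros Ht Hk1 Hk2 Hg Hm. unfold abel_rhs.
  assert (H1 : 0 <= k1 / t <= k1 / t0).
  { split; [apply Rmult_le_pos; [lra | left; apply Rinv_0_lt_compat; lra]|].
    apply Rmult_le_compat_l; [lra|]. apply Rinv_le_contravar; lra. }
  assert (H2 : 0 <= k2 * g t / (t * y) <= k2 * G / (t0 * m)).
  { split; [apply Rmult_le_pos; [nra | left; apply Rinv_0_lt_compat; nra]|].
    apply Rmult_le_compat; [nra | left; apply Rinv_0_lt_compat; nra | nra |].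
    apply Rinv_le_contravar; nra. }
  apply Rabs_le_between. lra.
Qed.

Lemma abel_rhs_neg t y : 0 < t -> 0 < y -> k1 * y < k2 * g t -> abel_rhs k1 k2 g t y < 0.
Proof.
  intros Ht Hy Hlt. unfold abel_rhs.
  replace (k1 / t - k2 * g t / (t * y)) with ((k1 * y - k2 * g t) / (t * y)) by (field; lra).
  apply Rmult_lt_reg_r with (t * y); [nra|]. unfold Rdiv. rewrite Rmult_assoc, Rinv_l; nra.
Qed.

Lemma abel_rhs_monotone t y1 y2 :
  0 < t -> 0 <= k2 -> 0 <= g t -> 0 < y1 -> 0 < y2 ->
  0 <= (abel_rhs k1 k2 g t y1 - abel_rhs k1 k2 g t y2) * (y1 - y2).
Proof.
  intros Ht Hk2 Hg Hy1 Hy2.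
  replace (abel_rhs k1 k2 g t y1 - abel_rhs k1 k2 g t y2)
    with (k2 * g t / (t * (y1 * y2)) * (y1 - y2)) by (unfold abel_rhs; field; repeat split; lra).
  rewrite Rmult_assoc. apply Rmult_le_pos; [|apply Rle_0_sqr].
  apply Rmult_le_pos; [nra | left; apply Rinv_0_lt_compat; apply Rmult_lt_0_compat; nra].
Qed.

Lemma abel_equation_iff t y d :
  0 < t -> y <> 0 ->
  (d * y - k1 / t * y = - k2 * (g t / t) <-> d = abel_rhs k1 k2 g t y).
Proof.
  intros Ht Hy. unfold abel_rhs. split.
  - intros H. apply (Rmult_eq_reg_r y); [|exact Hy].
    replace (d * y) with (k1 / t * y - k2 * (g t / t)) by lra. field. lra.
  - intros ->. field. lra.
Qed.

Definition abel_solution_on (Y0 a hi : R) (f : R -> R) : Prop :=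
  f hi = Y0 /\
  (forall t, a <= t <= hi -> 0 < f t) /\
  (forall t, a <= t < hi -> derivable_pt_lim f t (abel_rhs k1 k2 g t (f t))) /\
  limit1_in f (fun t => a <= t <= hi) Y0 hi.

Lemma abel_solution_on_sub Y0 a c hi f :
  a <= c -> abel_solution_on Y0 a hi f -> abel_solution_on Y0 c hi f.
Proof.
  intros Hac [Hhi [Hpos [Hd Hlim]]]. split; [exact Hhi|]. split; [|split].
  - intros t Ht. apply Hpos. lra.
  - intros t Ht. apply Hd. lra.
  - apply (limit1_imp _ _ _ _ _ (fun t Ht => conj (Rle_trans _ _ _ Hac (proj1 Ht)) (proj2 Ht)) Hlim).
Qed.

Lemma abel_solution_on_ext Y0 a' a hi f psi :
  a' < a <= hi -> abel_solution_on Y0 a' hi f -> (forall t, a' <= t <= hi -> psi t = f t) ->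
  abel_solution_on Y0 a hi psi.
Proof.
  intros Ha [Hhi [Hpos [Hd Hlim]]] Heq.
  split; [rewrite Heq; lra|]. split; [|split].
  - intros t Ht. rewrite Heq by lra. apply Hpos. lra.
  - intros t Ht. rewrite Heq by lra.
    apply (derivable_pt_lim_locally_ext f psi t a' hi); [lra | |apply Hd; lra].
    intros z Hz. symmetry. apply Heq. lra.
  - apply (limit1_ext f psi); [intros t Ht; symmetry; apply Heq; lra|].
    apply (limit1_imp _ _ _ _ _ (fun t Ht => conj (Rlt_le _ _ (Rlt_le_trans _ _ _ (proj1 Ha) (proj1 Ht))) (proj2 Ht)) Hlim).
Qed.

Lemma abel_solution_unique Y0 a hi f1 f2 :
  0 < a -> 0 <= k2 -> (forall t, a <= t < hi -> 0 <= g t) ->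
  abel_solution_on Y0 a hi f1 -> abel_solution_on Y0 a hi f2 ->
  forall t, a <= t <= hi -> f1 t = f2 t.
Proof.
  intros Ha Hk2 Hg [H1 [P1 [D1 L1]]] [H2 [P2 [D2 L2]]] t Ht.
  destruct (Rle_lt_or_eq_dec _ _ (proj2 Ht)) as [Hlt | ->]; [|congruence].
  apply (backward_uniqueness f1 f2 (fun t => abel_rhs k1 k2 g t (f1 t)) (fun t => abel_rhs k1 k2 g t (f2 t)) a hi);
    [exact D1 | exact D2 | | | lra].
  - intros x Hx. apply abel_rhs_monotone; [lra | exact Hk2 | apply Hg, Hx | apply P1; lra | apply P2; lra].
  - rewrite <- (Rminus_diag Y0). apply limit_minus;
      apply (limit1_imp _ (fun t => a <= t <= hi)); auto; intros x Hx; lra.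
Qed.


Lemma abel_truncated_solution Y0 a' hi G m :
  0 < a' <= hi -> 0 <= k1 -> 0 <= k2 -> 0 < m ->
  (forall t, a' <= t <= hi -> continuity_pt g t /\ 0 <= g t <= G) ->
  exists y B, y hi = Y0 /\
    (forall t, a' < t < hi -> derivable_pt_lim y t (abel_rhs k1 k2 g (clamp a' hi t) (Rmax m (y t)))) /\
    (forall s t, a' <= s <= hi -> a' <= t <= hi -> Rabs (y s - y t) <= B * Rabs (s - t)).
Proof.
  intros Ha' Hk1 Hk2 Hm Hg.
  assert (HG : 0 <= G) by (destruct (Hg hi ltac:(lra)) as [_ HG]; lra).
  assert (HL : 0 <= k2 * G / (a' * (m * m))).
  { apply Rmult_le_pos; [nra | left; apply Rinv_0_lt_compat, Rmult_lt_0_compat; nra]. }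
  assert (Hclamp : forall t, a' <= clamp a' hi t <= hi) by (intros; apply clamp_bounds; lra).
  assert (Hmax_m : forall y, m <= Rmax m y) by (intros; apply Rmax_l).
  destruct (ode_backward_existence (fun t y => abel_rhs k1 k2 g (clamp a' hi t) (Rmax m y))
              a' hi Y0 (k2 * G / (a' * (m * m))) (k1 / a' + k2 * G / (a' * m)))
    as [y [Hyhi [Hyd Hylip]]]; [lra | exact HL | | | |].
  - intros y0 t.
    change (continuity_pt (comp (fun s => abel_rhs k1 k2 g s (Rmax m y0)) (clamp a' hi)) t).
    apply continuity_pt_comp.
    + apply (continuity_pt_of_lipschitz _ _ 1). intros s. rewrite Rmult_1_l. apply clamp_lipschitz.
    + specialize (Hclamp t). specialize (Hmax_m y0).
      apply abel_rhs_continuity_pt; [lra | lra | apply Hg, Hclamp].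
  - intros t y1 y2. specialize (Hclamp t). eapply Rle_trans.
    + apply (abel_rhs_lipschitz a' _ G m); [lra | lra | apply Hg, Hclamp | exact Hm
        | apply Hmax_m | apply Hmax_m].
    + apply Rmult_le_compat_l; [exact HL | apply Rmax_lipschitz].
  - intros t y0. specialize (Hclamp t).
    apply abel_rhs_bounded; [lra | lra | lra | apply Hg, Hclamp | split; [lra | apply Hmax_m]].
  - now exists y, (k1 / a' + k2 * G / (a' * m)).
Qed.

Lemma abel_local_solution Y0 a' a hi :
  0 < a' < a -> a <= hi -> 0 < k1 -> 0 < k2 -> 0 < Y0 ->
  (forall t, a' <= t <= hi -> continuity_pt g t /\ 0 < g t) ->
  exists f, abel_solution_on Y0 a hi f.
Proof.
  intros Ha' Hahi Hk1 Hk2 HY0 Hg.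
  destruct (continuity_ab_min g a' hi) as [tmin [Hmin Htmin]]; [lra | intros t Ht; apply Hg, Ht|].
  destruct (continuity_ab_maj g a' hi) as [tmax [Hmax Htmax]]; [lra | intros t Ht; apply Hg, Ht|].
  assert (Hc : 0 < g tmin) by (apply Hg, Htmin).
  (* [k1 m < k2 g] on [a', hi]: below [m] solutions decrease, so backward from [Y0 >= m] they stay above [m]. *)
  set (m := Rmin Y0 (k2 * g tmin / k1) / 2).
  assert (Hm0 : 0 < Rmin Y0 (k2 * g tmin / k1)) by (apply Rmin_pos; [lra | apply Rdiv_lt_0_compat; nra]).
  assert (Hm : 0 < m) by (unfold m; lra).
  assert (HmY : m <= Y0) by (unfold m; pose proof (Rmin_l Y0 (k2 * g tmin / k1)); lra).
  assert (Hmc : k1 * m < k2 * g tmin).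
  { unfold m. pose proof (Rmin_r Y0 (k2 * g tmin / k1)).
    assert (k1 * (k2 * g tmin / k1) = k2 * g tmin) by (field; lra). nra. }
  destruct (abel_truncated_solution Y0 a' hi (g tmax) m) as [y [B [Hyhi [Hyd Hylip]]]]; try lra.
  { intros t Ht. destruct (Hg t Ht) as [Hgc Hgpos]. repeat split; [exact Hgc | lra | now apply Hmax]. }
  assert (Hbarrier : forall t, a <= t <= hi -> m <= y t).
  { apply (lower_barrier y (fun t => abel_rhs k1 k2 g (clamp a' hi t) (Rmax m (y t))) a hi m B);
      [lra | | | | lra].
    - intros s t Hs Ht. apply Hylip; lra.
    - intros t Ht. apply Hyd. lra.
    - intros t Ht Hyt. rewrite clamp_id, Rmax_left by lra.
      apply abel_rhs_neg; [lra | lra|].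
      assert (g tmin <= g t) by (apply Hmin; lra). nra. }
  exists y. split; [exact Hyhi|]. split; [|split].
  - intros t Ht. specialize (Hbarrier t Ht). lra.
  - intros t Ht. assert (Hd := Hyd t ltac:(lra)).
    rewrite clamp_id, Rmax_right in Hd by (try apply Hbarrier; lra). exact Hd.
  - rewrite <- Hyhi. apply (limit1_in_of_lipschitz _ _ _ B). intros t Ht. apply Hylip; lra.
Qed.

Lemma abel_solution_glued Y0 lo hi :
  0 <= lo < hi -> 0 < k1 -> 0 < k2 -> 0 < Y0 ->
  (forall t, lo < t <= hi -> continuity_pt g t /\ 0 < g t) ->
  exists psi, forall a, lo < a < hi -> abel_solution_on Y0 a hi psi.
Proof.
  intros Hlohi Hk1 Hk2 HY0 Hg.
  assert (Hlocal : forall a, exists f, lo < a < hi -> abel_solution_on Y0 a hi f).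
  { intros a. destruct (Rlt_dec lo a) as [Hl|Hl]; [destruct (Rlt_dec a hi) as [Hh|Hh]|];
      try (exists (fun _ => 0); intros; lra).
    destruct (abel_local_solution Y0 ((lo + a) / 2) a hi) as [f Hf]; try lra.
    - intros t Ht. apply Hg. lra.
    - now exists f. }
  destruct (functional_choice _ Hlocal) as [sol Hsol].
  assert (Hagree : forall a1 a2 v, lo < a1 < hi -> lo < a2 < hi -> a1 <= v <= hi -> a2 <= v <= hi ->
                                  sol a1 v = sol a2 v).
  { intros a1 a2 v H1 H2 Hv1 Hv2.
    apply (abel_solution_unique Y0 (Rmax a1 a2) hi).
    - pose proof (Rmax_l a1 a2). lra.
    - lra.
    - intros t Ht. pose proof (Rmax_l a1 a2). left. apply Hg. lra.
    - apply (abel_solution_on_sub Y0 a1); [apply Rmax_l | now apply Hsol].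
    - apply (abel_solution_on_sub Y0 a2); [apply Rmax_r | now apply Hsol].
    - split; [now apply Rmax_lub | lra]. }
  exists (fun t => sol ((lo + t) / 2) t).
  intros a Ha. apply (abel_solution_on_ext Y0 ((lo + a) / 2) a hi (sol ((lo + a) / 2))).
  - lra.
  - apply Hsol. lra.
  - intros t Ht. apply Hagree; lra.
Qed.

End AbelEquation.

(** * The source term of the SEIR model *)

Definition seir_source (beta gamma St Rt N u : R) : R :=
  beta * N - beta * St * exp ((beta / gamma) * Rt) * u + gamma * ln u.

Lemma ln_chord p q u : 0 < p -> p <= u <= q ->
  (q - u) * ln p + (u - p) * ln q <= (q - p) * ln u.
Proof.
  intros Hp Hu.
  assert (Hln : forall x, 0 < x -> ln x - ln u <= x / u - 1).
  { intros x Hx. rewrite <- ln_div by lra. pose proof (exp_ineq1_le (ln (x / u))) as H.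
    rewrite exp_ln in H by (apply Rdiv_lt_0_compat; lra). lra. }
  assert (H1 := Hln p Hp). assert (H2 := Hln q ltac:(lra)).
  assert (H3 : (q - u) * (ln p - ln u) <= (q - u) * (p / u - 1)) by (apply Rmult_le_compat_l; lra).
  assert (H4 : (u - p) * (ln q - ln u) <= (u - p) * (q / u - 1)) by (apply Rmult_le_compat_l; lra).
  assert (H5 : (q - u) * (p / u - 1) + (u - p) * (q / u - 1) = 0) by (field; lra).
  nra.
Qed.

Lemma seir_source_chord beta gamma St Rt N p q u :
  0 <= gamma -> 0 < p -> p <= u <= q ->
  (q - u) * seir_source beta gamma St Rt N p + (u - p) * seir_source beta gamma St Rt N q
  <= (q - p) * seir_source beta gamma St Rt N u.
Proof.
  intros Hg Hp Hu. pose proof (ln_chord p q u Hp Hu). unfold seir_source.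
  assert (gamma * ((q - u) * ln p + (u - p) * ln q) <= gamma * ((q - p) * ln u))
    by (apply Rmult_le_compat_l; lra).
  nra.
Qed.

Lemma seir_source_at_left beta gamma St Rt N alpha :
  0 < gamma ->
  alpha = N - St * exp ((beta / gamma) * Rt) * exp (- (beta / gamma) * alpha) ->
  seir_source beta gamma St Rt N (exp (- (beta / gamma) * alpha)) = 0.
Proof.
  intros Hg Halpha. unfold seir_source. rewrite ln_exp.
  replace (beta * St * exp (beta / gamma * Rt) * exp (- (beta / gamma) * alpha))
    with (beta * (St * exp (beta / gamma * Rt) * exp (- (beta / gamma) * alpha))) by ring.
  replace (St * exp (beta / gamma * Rt) * exp (- (beta / gamma) * alpha)) with (N - alpha) by lra.
  field. lra.
Qed.

Lemma seir_source_at_right beta gamma St Rt N :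
  0 < gamma -> seir_source beta gamma St Rt N (exp (- (beta / gamma) * Rt)) = beta * (N - St - Rt).
Proof.
  intros Hg. unfold seir_source. rewrite ln_exp, Rmult_assoc, <- exp_plus.
  replace (beta / gamma * Rt + - (beta / gamma) * Rt) with 0 by ring.
  rewrite exp_0. field. lra.
Qed.

Lemma seir_source_pos beta gamma St Rt N alpha u :
  0 < beta -> 0 < gamma -> St + Rt < N ->
  alpha = N - St * exp ((beta / gamma) * Rt) * exp (- (beta / gamma) * alpha) ->
  exp (- (beta / gamma) * alpha) < u <= exp (- (beta / gamma) * Rt) ->
  0 < seir_source beta gamma St Rt N u.
Proof.
  intros Hb Hg HN Halpha Hu.
  pose proof (seir_source_chord beta gamma St Rt N (exp (- (beta / gamma) * alpha))
                (exp (- (beta / gamma) * Rt)) u ltac:(lra) (exp_pos _) ltac:(lra)) as H.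
  rewrite (seir_source_at_left _ _ _ _ _ alpha Hg Halpha), seir_source_at_right in H by exact Hg.
  assert (0 < (u - exp (- (beta / gamma) * alpha)) * (beta * (N - St - Rt)))
    by (apply Rmult_lt_0_compat; nra).
  nra.
Qed.

Lemma seir_source_continuity_pt beta gamma St Rt N u :
  0 < u -> continuity_pt (seir_source beta gamma St Rt N) u.
Proof.
  intros Hu. apply continuity_pt_filterlim, (ex_derive_continuous (K := R_AbsRing) (V := R_NormedModule)).
  unfold seir_source. auto_derive. lra.
Qed.

Lemma ivp_solution_of_abel beta gamma delta St It Rt N alpha psi :
  exp (- (beta / gamma) * alpha) < exp (- (beta / gamma) * Rt) ->
  (forall a, exp (- (beta / gamma) * alpha) < a < exp (- (beta / gamma) * Rt) ->
     abel_solution_on (gamma + delta) delta (seir_source beta gamma St Rt N) (beta * It) a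
       (exp (- (beta / gamma) * Rt)) psi) ->
  ivp_solution beta gamma delta St It Rt N alpha psi.
Proof.
  unfold ivp_solution. cbv zeta.
  set (lo := exp (- (beta / gamma) * alpha)). set (hi := exp (- (beta / gamma) * Rt)).
  intros Hlohi Hsol. pose proof (exp_pos (- (beta / gamma) * alpha)) as Hlo. fold lo in Hlo.
  destruct (Hsol ((lo + hi) / 2) ltac:(lra)) as [Hhi [Hpos [_ Hlim]]].
  split; [|split; [|split]].
  - intros u Hu. destruct (Hsol u Hu) as [_ [Pu [Du _]]].
    exists (abel_rhs (gamma + delta) delta (seir_source beta gamma St Rt N) u (psi u)).
    split; [apply Du; lra|].
    apply (abel_equation_iff (gamma + delta) delta (seir_source beta gamma St Rt N)); [lra | | reflexivity].
    apply Rgt_not_eq, Pu. lra.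
  - rewrite Hhi. apply (limit1_in_enlarge psi (fun t => (lo + hi) / 2 <= t <= hi) _ _ _ ((hi - lo) / 2));
      [lra | | exact Hlim].
    intros x Hx Hxhi. split_Rabs; lra.
  - exact Hhi.
  - intros u Hu. destruct (Rle_lt_dec ((lo + hi) / 2) u) as [Hle|Hlt].
    + apply Hpos. lra.
    + destruct (Hsol u ltac:(lra)) as [_ [Pu _]]. apply Pu. lra.
Qed.

Lemma abel_of_ivp_solution beta gamma delta St It Rt N alpha phi a :
  exp (- (beta / gamma) * alpha) < a ->
  ivp_solution beta gamma delta St It Rt N alpha phi ->
  abel_solution_on (gamma + delta) delta (seir_source beta gamma St Rt N) (beta * It) a
    (exp (- (beta / gamma) * Rt)) phi.
Proof.
  unfold ivp_solution. cbv zeta.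
  set (lo := exp (- (beta / gamma) * alpha)). set (hi := exp (- (beta / gamma) * Rt)).
  intros Ha [Hode [Hlim [Hhi Hpos]]]. pose proof (exp_pos (- (beta / gamma) * alpha)) as Hlo. fold lo in Hlo.
  split; [exact Hhi|]. split; [|split].
  - intros t Ht. apply Hpos. lra.
  - intros t Ht. destruct (Hode t ltac:(lra)) as [d [Hd Heq]].
    apply (abel_equation_iff (gamma + delta) delta (seir_source beta gamma St Rt N)) in Heq;
      [now rewrite <- Heq | lra | apply Rgt_not_eq, Hpos; lra].
  - rewrite <- Hhi. apply (limit1_imp _ (fun x => lo < x <= hi)); [intros x Hx; lra | exact Hlim].
Qed.

Theorem lemma8 (beta gamma delta St Et It Rt alpha : R)
  (hbeta : 0 < beta) (hgamma : 0 < gamma) (hdelta : 0 < delta)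
  (hN : 0 < St + Et + It + Rt)
  (A1 : 0 < It)
  (A2 : Et > (gamma / delta) * It)
  (A3 : St > delta * Et / (beta * It))
  (A4a : 0 <= Rt)
  (A4b : St + Et + It + Rt > St * exp ((beta / gamma) * Rt) + Rt)
  (halpha_int : Rt < alpha < St + Et + It + Rt)
  (halpha_eq : alpha = (St + Et + It + Rt)
                 - St * exp ((beta / gamma) * Rt) * exp (- (beta / gamma) * alpha))
  (A5 : St < (gamma / beta) * exp ((beta / gamma) * (alpha - Rt))) :
  exists psi : R -> R,
    ivp_solution beta gamma delta St It Rt (St + Et + It + Rt) alpha psi /\
    forall phi : R -> R,
      ivp_solution beta gamma delta St It Rt (St + Et + It + Rt) alpha phi ->
      forall u, exp (- (beta / gamma) * alpha) < u <= exp (- (beta / gamma) * Rt) ->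
        phi u = psi u.
Proof.
  set (N := St + Et + It + Rt) in *.
  set (lo := exp (- (beta / gamma) * alpha)). set (hi := exp (- (beta / gamma) * Rt)).
  set (g := seir_source beta gamma St Rt N).
  assert (HEt : 0 < Et).
  { assert (0 < gamma / delta * It) by (apply Rmult_lt_0_compat; [apply Rdiv_lt_0_compat|]; lra). lra. }
  assert (Hlo : 0 < lo) by apply exp_pos.
  assert (Hlohi : lo < hi).
  { apply exp_increasing. assert (0 < beta / gamma) by (apply Rdiv_lt_0_compat; lra). nra. }
  assert (Hg : forall t, lo < t <= hi -> continuity_pt g t /\ 0 < g t).
  { intros t Ht. split; [apply seir_source_continuity_pt; lra|].
    apply (seir_source_pos beta gamma St Rt N alpha); [lra | lra | unfold N; lra | exact halpha_eq | exact Ht]. }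
  destruct (abel_solution_glued (gamma + delta) delta g (beta * It) lo hi) as [psi Hpsi];
    [lra | lra | lra | nra | exact Hg |].
  exists psi. split.
  - now apply ivp_solution_of_abel.
  - intros phi Hphi u Hu.
    apply (abel_solution_unique (gamma + delta) delta g (beta * It) ((lo + u) / 2) hi); try lra.
    + intros t Ht. left. apply Hg. lra.
    + apply (abel_of_ivp_solution _ _ _ _ _ _ _ alpha); [unfold lo in *; lra | exact Hphi].
    + apply Hpsi. lra.
Qed.
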